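(* Let $k\ge1$ and $r\ge0$ be integers, and let $\mathcal{C}$ be a multiset of $2^k+r$ non-zero residues modulo $2^{k+1}$ such that no sub-collection sums to $2^k$ modulo $2^{k+1}$, and such that for no odd $\lambda$ can $\lambda\cdot\mathcal{C}$ be type 1 compressed. Then at least one of the following holds: $\mathcal{C}$ contains at least $2^{k-1}+r$ even residues; or there is an odd residue $t$ modulo $2^{k+1}$ such that $\mathcal{C}$ contains at least $2^{k-1}+r$ elements each lying in $\{t,-t,2^k-t,-(2^k-t)\}$; or there are three elements $x_1,x_2,x_3$ of $\mathcal{C}$ (three distinct members of the multiset) with $|\{x_1,x_2,x_3\}^*|\ge6$.
   Context: For a multiset $\mathcal{D}=\{a_1,\dots,a_d\}$ of residues modulo $2^{k+1}$, $\mathcal{D}^*=\{\sum_{i\in I}a_i \bmod 2^{k+1}: I\subseteq[d]\}$ (including $0$). $\lambda\cdot\mathcal{C}=\{\lambda c:c\in\mathcal{C}\}$. For a residue $t$, $|t|$ is the minimal absolute value of an integer in its residue class. A multiset $\mathcal{D}$ can be type 1 compressed if for some $\lambda>0$ it contains at least $\lambda$ elements each equal to $\pm1$ and also an element $t$ with $1<|t|\le\lambda+1$. *)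

From HB Require Import structures.
From mathcomp Require Import all_boot all_order all_algebra.
Set Implicit Arguments. Unset Strict Implicit. Unset Printing Implicit Defensive.
Import Order.TTheory GRing.Theory Num.Theory.
Local Open Scope ring_scope.

(* D^* : the set of all subset sums (sub-multisets chosen by a bitmask,
   including the empty one, giving 0). *)
Definition subsums (n : nat) (D : seq 'Z_n) : {set 'Z_n} :=
  [set x | [exists b : (size D).-tuple bool, \sum_(y <- mask b D) y == x]].

Definition absres (n : nat) (t : 'Z_n) : nat := minn (val t) (n - val t).

Definition dilate (n : nat) (lam : nat) (C : seq 'Z_n) : seq 'Z_n :=
  map (fun c => lam%:R * c) C.

Definition type1_compressible (n : nat) (D : seq 'Z_n) : Prop :=
  exists lam : nat, (0 < lam)%N /\
    (lam <= count (fun x : 'Z_n => (x == 1%R) || (x == (-1)%R)) D)%N /\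
    exists2 t, t \in D & ((1 < absres t) && (absres t <= lam.+1))%N.

(* Take an odd a in C (if there is none, C is all even).  If some x in C is
   not +-a, then it is not +-2a either: dilating by a^-1 would turn a into 1
   and x into +-2, a type 1 compression.  As no subsum of C equals 2^k, and 0
   and 2^k are the only residues with zero double, a, x, a + x and any third
   element y of C have nonzero doubles.  Together with a not being a double
   (it is odd), this allows at most two coincidences between 0, a, x, a + x
   and their translates by y, hence six distinct subsums. *)

From HB Require Import structures.
From mathcomp Require Import all_boot all_order all_algebra.
From mathcomp Require Import ring zify.
Import Order.TTheory GRing.Theory Num.Theory.
Local Open Scope ring_scope.

Lemma absres_opp n (t : 'Z_n) : (1 < n)%N -> absres (- t) = absres t.
Proof.
move=> n_gt1; case: t => v /=; rewrite /absres /= (Zp_cast n_gt1) => v_lt.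
have [-> | v_gt0] := posnP v; first by rewrite subn0 modnn; lia.
by rewrite modn_small; lia.
Qed.

Section Zp2.

Variable k : nat.
Local Notation Z := 'Z_(2 ^ k.+1).
Local Notation half := ((2 ^ k)%N%:R : Z).

Let Z_gt1 : (1 < 2 ^ k.+1)%N.
Proof. by rewrite -{1}(expn0 2) ltn_exp2l. Qed.

Lemma val_Zp2_nat m : (m < 2 ^ k.+1)%N -> val (m%:R : Z) = m.
Proof. by move=> m_lt; apply: etrans (val_Zp_nat Z_gt1 m) _; rewrite modn_small. Qed.

Lemma val_Zp2_double (z : Z) : val (z *+ 2) = ((val z).*2 %% 2 ^ k.+1)%N.
Proof. by rewrite -(val_Zp_nat Z_gt1) -muln2 natrM natr_Zp mulr_natr. Qed.

Lemma Zp2_double_neq_odd (z a : Z) : odd (val a) -> z *+ 2 != a.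
Proof.
apply: contraL => /eqP <-.
by rewrite val_Zp2_double odd_mod ?odd_double // oddX.
Qed.

Lemma Zp2_double_eq0 (z : Z) : (z *+ 2 == 0) = (z == 0) || (z == half).
Proof.
apply/eqP/orP => [|[] /eqP ->]; last 2 first.
- by rewrite mul0rn.
- by rewrite -mulrnA -expnSr pchar_Zp.
move=> /(congr1 val); rewrite val_Zp2_double /= => /eqP z2_dvd.
have /dvdnP [q z_eq] : (2 ^ k %| val z)%N.
  by rewrite -(@dvdn_pmul2r 2) // -expnSr muln2.
have : (q < 2)%N.
  rewrite -(ltn_pmul2r (expn_gt0 2 k)) -z_eq -expnS.
  by rewrite -[X in (_ < X)%N](Zp_cast Z_gt1) ltn_ord.
case: q z_eq => [|[|//]] z_eq _; [left | right]; apply/eqP/val_inj; rewrite z_eq //.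
by rewrite mul1n val_Zp2_nat // ltn_exp2l.
Qed.

Lemma Zp2_odd_double_neq0 (a : Z) : (1 <= k)%N -> odd (val a) -> a *+ 2 != 0.
Proof.
move=> k_ge1; apply: contraL; rewrite Zp2_double_eq0 => /orP [] /eqP -> //.
by rewrite val_Zp2_nat ?ltn_exp2l // oddX orbF -lt0n.
Qed.

Lemma unit_Zp2E (a : Z) : (a \is a GRing.unit) = odd (val a).
Proof. by rewrite -{1}(natr_Zp a) unitZpE // coprime_pexpl // coprime2n. Qed.

Lemma absres_Zp2_two : (1 <= k)%N -> absres (2%:R : Z) = 2%N.
Proof.
move=> k_ge1; have four_le : (2 ^ 2 <= 2 ^ k.+1)%N by rewrite leq_exp2l.
by rewrite /absres val_Zp2_nat; lia.
Qed.

Lemma type1_compressible_dilate_inv (C : seq Z) (a x : Z) :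
    (1 <= k)%N -> a \in C -> odd (val a) -> x \in C ->
    (x == a *+ 2) || (x == - (a *+ 2)) ->
  type1_compressible (dilate (val a^-1) C).
Proof.
move=> k_ge1 aC a_odd xC x_2a.
have a_unit : a \is a GRing.unit by rewrite unit_Zp2E.
have inv_a : (val a^-1)%:R = a^-1 by rewrite natr_Zp.
exists 1%N; split => //; split.
  rewrite -has_count; apply/hasP; exists 1; last by rewrite eqxx.
  by apply/mapP; exists a => //; rewrite inv_a mulVr.
exists ((val a^-1)%:R * x); first by apply/mapP; exists x.
case/orP: x_2a => /eqP ->; rewrite ?mulrN mulrnAr inv_a mulVr //.
  by rewrite absres_Zp2_two.
by rewrite absres_opp // absres_Zp2_two.
Qed.

End Zp2.

Section MaskSums.

Context {V : nmodType} {s : seq V}.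

Lemma sum_mask_mkseq (P : pred nat) :
  \sum_(x <- mask (mkseq P (size s)) s) x = \sum_(i < size s | P i) s`_i.
Proof.
rewrite big_mask; apply: eq_big => [i | i _]; first by rewrite nth_mkseq ?andbT.
by rewrite (tnth_nth 0).
Qed.

Context {v : V}.
Hypothesis sum_mask_neq : forall m : bitseq, \sum_(x <- mask m s) x != v.

Lemma nth_neq_of_sum_mask_neq (i : 'I_(size s)) : s`_i != v.
Proof.
have := sum_mask_neq (mkseq (pred1 (val i)) (size s)).
by rewrite sum_mask_mkseq (big_pred1 i).
Qed.

Lemma nth_add_neq_of_sum_mask_neq (i j : 'I_(size s)) : i != j -> s`_i + s`_j != v.
Proof.
move=> ij; have := sum_mask_neq (mkseq (fun m => (m == i) || (m == j)) (size s)).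
rewrite sum_mask_mkseq (bigD1 i) ?eqxx //= (big_pred1 j) // => l /=.
by rewrite andb_orl andbN andb_idr // => /eqP/val_inj ->; rewrite eq_sym.
Qed.

End MaskSums.

Section Subsums3.

Variables (n : nat) (a x y : 'Z_n).

Lemma mem_subsums3 (b : 3.-tuple bool) :
  \sum_(z <- mask b [:: a; x; y]) z \in subsums [:: a; x; y].
Proof. by rewrite inE; apply/existsP; exists b. Qed.

Lemma card_subsums3_ge6_of_uniq (b c : 3.-tuple bool) :
    uniq [:: 0; a; x; a + x; \sum_(z <- mask b [:: a; x; y]) z;
                             \sum_(z <- mask c [:: a; x; y]) z] ->
  (6 <= #|subsums [:: a; x; y]|)%N.
Proof.
move=> sums_uniq; rewrite cardE; apply: uniq_leq_size sums_uniq _ => z.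
rewrite mem_enum !in_cons in_nil orbF.
case/or4P => [| | | /or3P [| |]] /eqP ->; last 2 first.
- exact: mem_subsums3.
- exact: mem_subsums3.
- by have := mem_subsums3 [tuple false; false; false]; rewrite big_nil.
- by have := mem_subsums3 [tuple true; false; false]; rewrite big_seq1.
- by have := mem_subsums3 [tuple false; true; false]; rewrite big_seq1.
- by have := mem_subsums3 [tuple true; true; false]; rewrite big_cons big_seq1.
Qed.

Ltac neq_by_ring :=
  rewrite -subr_eq0;
  match goal with |- is_true (?l != 0) =>
    first [ match goal with H : is_true (?w != 0) |- _ =>
              (have -> : l = w by ring); exact H end
          | match goal with H : is_true (?w != 0) |- _ =>
              (have -> : l = - w by ring); rewrite oppr_eq0; exact H end ]
  end.

Ltac uniq_by_ring :=
  rewrite /= ?big_cons ?big_nil !inE !negb_or ?andbT ?addr0;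
  repeat (apply/andP; split); neq_by_ring.

Lemma card_subsums3_ge6 :
    (forall z : 'Z_n, z *+ 2 != a) ->
    a *+ 2 != 0 -> x *+ 2 != 0 -> (a + x) *+ 2 != 0 -> y *+ 2 != 0 ->
    x != a -> x != a *+ 2 -> x != - (a *+ 2) ->
  (6 <= #|subsums [:: a; x; y]|)%N.
Proof.
move=> a_not_double a2 x2 ax2 y2.
rewrite -!(subr_eq0 x) => xa x_2a x_N2a.
have a0 : a != 0 by rewrite -(mul0rn _ 2) eq_sym.
have x0 : x != 0 by apply: contraNneq x2 => ->; rewrite mul0rn.
have y0 : y != 0 by apply: contraNneq y2 => ->; rewrite mul0rn.
have ax : a + x != 0 by apply: contraNneq ax2 => ->; rewrite mul0rn.
have a_2x : a - x *+ 2 != 0 by rewrite subr_eq0 eq_sym.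
have a_N2x : a + x *+ 2 != 0 by rewrite -[x]opprK mulNrn subr_eq0 eq_sym.
(* For these five values of y some translate y + s, s in {0, a, x, a + x},
   falls back into that set, so the masks avoid the colliding translates. *)
have ge6 := card_subsums3_ge6_of_uniq.
have [y_special | y_generic] := boolP (y \in [:: a; x; a + x; - a; x - a]).
  move: y_special; rewrite !inE => /or4P [| | | /orP []] /eqP y_eq.
  - apply: (ge6 [tuple true; false; true] [tuple true; true; true]).
    by rewrite y_eq in y0 y2 *; uniq_by_ring.
  - apply: (ge6 [tuple false; true; true] [tuple true; true; true]).
    by rewrite y_eq in y0 y2 *; uniq_by_ring.
  - apply: (ge6 [tuple true; false; true] [tuple false; true; true]).
    by rewrite y_eq in y0 y2 *; uniq_by_ring.
  - apply: (ge6 [tuple false; false; true] [tuple false; true; true]).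
    by rewrite y_eq in y0 y2 *; uniq_by_ring.
  - apply: (ge6 [tuple false; false; true] [tuple false; true; true]).
    by rewrite y_eq in y0 y2 *; uniq_by_ring.
move: y_generic; rewrite !inE !negb_or -!(subr_eq0 y) => /and5P [ya yx yax yNa yxa].
apply: (ge6 [tuple false; false; true] [tuple true; false; true]).
by uniq_by_ring.
Qed.

End Subsums3.

Lemma exists_ord_neq2 {n} (i j : 'I_n) :
  (2 < n)%N -> exists l : 'I_n, (l != i) && (l != j).
Proof.
move=> n_gt2; have : (0 < #|[predC pred2 i j]|)%N.
  rewrite -(ltn_add2l #|pred2 i j|) addn0 cardC card_ord card2.
  by case: (i != j) => //; apply: ltnW.
by case/card_gt0P => l; rewrite !inE negb_or; exists l.
Qed.

Section HalfFreeSubsums.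

Variables (k : nat) (C : seq 'Z_(2 ^ k.+1)).
Hypothesis C_neq0 : all (fun x => x != 0) C.
Hypothesis C_sum_neq_half : forall m : bitseq, \sum_(x <- mask m C) x != (2 ^ k)%N%:R.

Lemma nth_double_neq0 (i : 'I_(size C)) : C`_i *+ 2 != 0.
Proof.
rewrite Zp2_double_eq0 negb_or (nth_neq_of_sum_mask_neq C_sum_neq_half) andbT.
by apply: (allP C_neq0); apply: mem_nth.
Qed.

Lemma nth_add_double_neq0 (i j : 'I_(size C)) :
  i != j -> C`_i + C`_j != 0 -> (C`_i + C`_j) *+ 2 != 0.
Proof.
move=> ij ij0; rewrite Zp2_double_eq0 negb_or ij0.
exact: nth_add_neq_of_sum_mask_neq.
Qed.

End HalfFreeSubsums.

Theorem lemma3p8 (k r : nat) (C : seq 'Z_(2 ^ k.+1)) :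
  (1 <= k)%N ->
  size C = (2 ^ k + r)%N ->
  all (fun x => x != 0) C ->
  (forall b : bitseq, \sum_(x <- mask b C) x != (2 ^ k)%N%:R) ->
  (forall lam : nat, odd lam -> ~ type1_compressible (dilate lam C)) ->
  [\/ leq (2 ^ k.-1 + r)%N (count (fun x : 'Z_(2 ^ k.+1) => ~~ odd (val x)) C),
      (exists t : 'Z_(2 ^ k.+1), odd (val t) /\
         leq (2 ^ k.-1 + r)%N
             (count (fun x => x \in [:: t; - t; (2 ^ k)%N%:R - t;
                                        - ((2 ^ k)%N%:R - t)]) C))
    | (exists i j l : 'I_(size C),
         [/\ i != j, i != l, j != l &
             leq 6 #|subsums [:: C`_i; C`_j; C`_l]|])].
Proof.
move=> k_ge1 size_C C_neq0 C_sum_neq_half C_incompressible.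
have pow_k : (2 ^ k = 2 * 2 ^ k.-1)%N by rewrite -expnS prednK.
have bound_le_size : (2 ^ k.-1 + r <= size C)%N.
  by rewrite size_C leq_add2r pow_k leq_pmull.
have [C_even | ] := boolP (all (fun x : 'Z_(2 ^ k.+1) => ~~ odd (val x)) C).
  by apply: Or31; move: C_even; rewrite all_count => /eqP ->.
rewrite -has_predC => /hasP [a aC /negbNE a_odd].
have [C_pm_a | ] := boolP (all (fun x => (x == a) || (x == - a)) C).
  apply: Or32; exists a; split => //; move: bound_le_size; congr (_ <= _)%N.
  apply/esym/eqP; rewrite -all_count; apply: sub_all C_pm_a => x.
  by case/orP => /eqP ->; rewrite !inE eqxx ?orbT.
rewrite -has_predC => /hasP [x xC]; rewrite /= negb_or => /andP [x_neq_a x_neq_Na].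
have x_neq_2a : ~~ ((x == a *+ 2) || (x == - (a *+ 2))).
  apply/negP => x_2a; apply: (C_incompressible (val a^-1)).
    by rewrite -unit_Zp2E unitrV unit_Zp2E.
  exact: type1_compressible_dilate_inv x_2a.
have [C_small | C_big] := ltnP (size C) 3.
  apply: Or32; exists a; split => //.
  have -> : (2 ^ k.-1 + r = 1)%N.
    by move: (expn_gt0 2 k.-1) C_small; rewrite size_C pow_k; lia.
  by rewrite -has_count; apply/hasP; exists a; rewrite ?inE ?eqxx.
have [i a_eq] : exists i : 'I_(size C), C`_i = a.
  by have [i i_lt <-] := nthP 0 aC; exists (Ordinal i_lt).
have [j x_eq] : exists j : 'I_(size C), C`_j = x.
  by have [j j_lt <-] := nthP 0 xC; exists (Ordinal j_lt).
have ij : i != j by apply: contraNneq x_neq_a => ij; rewrite -a_eq -x_eq ij.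
have [l /andP [li lj]] := exists_ord_neq2 i j C_big.
apply: Or33; exists i, j, l; split; [exact: ij | by rewrite eq_sym.. |].
rewrite a_eq x_eq; move: x_neq_2a; rewrite negb_or => /andP [x_neq_2a x_neq_N2a].
apply: card_subsums3_ge6 => //.
- by move=> z; apply: Zp2_double_neq_odd.
- exact: Zp2_odd_double_neq0.
- by rewrite -x_eq nth_double_neq0.
- by rewrite -a_eq -x_eq nth_add_double_neq0 // a_eq x_eq addrC addr_eq0.
- by rewrite nth_double_neq0.
Qed.
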